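(* Let $S$ be a set of mutually orthogonal genuinely entangled pure states of three qubits, $\mathbb{C}^2\otimes\mathbb{C}^2\otimes\mathbb{C}^2$, that spans a proper subspace such that, for every bipartition of the three qubits, the orthogonal complement of the span of $S$ contains no pure state entangled with respect to that bipartition. Then $|S|\in\{6,7\}$, and both cardinalities $6$ and $7$ occur for such sets.
   Context: The bipartitions of three qubits $A,B,C$ are $A|BC$, $B|AC$, $C|AB$. A pure three-qubit state is genuinely entangled if it is not a product state with respect to any of these bipartitions; it is fully separable if it is of the form $|a\rangle|b\rangle|c\rangle$. Such a set $S$ is called a three-qubit unextendible entangled basis that is unextendible across every bipartition. *)

From HB Require Import structures.
From mathcomp Require Import all_boot all_order all_algebra.
From mathcomp Require Import complex.
From mathcomp Require Import Rstruct.
Set Implicit Arguments. Unset Strict Implicit. Unset Printing Implicit Defensive.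
Import Order.TTheory GRing.Theory Num.Theory.
Local Open Scope ring_scope.

Definition C : numClosedFieldType := (Rdefinitions.R)[i].

Definition qstate := 'rV[C]_8.

(* computational basis index |i j k> (i for A, j for B, k for C) <-> 4i+2j+k *)
Definition idx (i j k : 'I_2) : 'I_8 := inord (4 * i + 2 * j + k).

Definition coef (v : qstate) (i j k : 'I_2) : C := v 0 (idx i j k).

Definition inner (u v : qstate) : C := \sum_(l < 8) (u 0 l)^* * v 0 l.

Definition product_A_BC (v : qstate) : Prop :=
  exists (a : 'I_2 -> C) (w : 'I_2 -> 'I_2 -> C),
    forall i j k, coef v i j k = a i * w j k.
Definition product_B_AC (v : qstate) : Prop :=
  exists (b : 'I_2 -> C) (w : 'I_2 -> 'I_2 -> C),
    forall i j k, coef v i j k = b j * w i k.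
Definition product_C_AB (v : qstate) : Prop :=
  exists (c : 'I_2 -> C) (w : 'I_2 -> 'I_2 -> C),
    forall i j k, coef v i j k = c k * w i j.

Inductive bipartition := A_BC | B_AC | C_AB.

Definition product_wrt (p : bipartition) (v : qstate) : Prop :=
  match p with
  | A_BC => product_A_BC v
  | B_AC => product_B_AC v
  | C_AB => product_C_AB v
  end.

(* a (pure) state is a nonzero vector (normalisation is irrelevant) *)
Definition entangled_wrt (p : bipartition) (v : qstate) : Prop :=
  v != 0 /\ ~ product_wrt p v.

Definition genuinely_entangled (v : qstate) : Prop :=
  v != 0 /\ forall p, ~ product_wrt p v.

Definition orth_compl_span (S : seq qstate) (v : qstate) : Prop :=
  forall w, w \in (<<S>>%VS : {vspace qstate}) -> inner w v = 0.

Definition UEB_every_bipartition (S : seq qstate) : Prop :=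
  [/\ uniq S,
      forall v, v \in S -> genuinely_entangled v,
      forall u v, u \in S -> v \in S -> u != v -> inner u v = 0,
      (\dim (<<S>>%VS : {vspace qstate}) < 8)%N
    & forall p v, orth_compl_span S v -> ~ entangled_wrt p v].

(* The span of S has dimension |S| <= 7 since S is orthogonal, and every vector of
   its orthogonal complement K is a product state across A|BC and across B|AC.  A
   space of 2 x m matrices of rank at most one has dimension at most max(2, m): a
   larger one contains a nonzero matrix with vanishing first row and one with
   vanishing second row, and these two span it.  The B|C flattenings of the images
   of K under the two projections onto A-components therefore have dimension at
   most 2; so if dim K >= 3, K meets the kernels of both projections, and the same
   argument for the A|BC flattening gives dim K <= 2.  Hence |S| >= 6.  Both sizes
   occur: there are integer examples spanning all of C^8 except |000>, resp.
   except |000> and |001>. *)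

From mathcomp Require Import all_boot all_algebra.
From mathcomp Require Import ring zify.
From Stdlib Require Import Classical.
Set Implicit Arguments. Unset Strict Implicit. Unset Printing Implicit Defensive.
Import GRing.Theory Num.Theory.
Local Open Scope ring_scope.

Section Collinear.
Variable F : fieldType.

Definition collinear n (l r : 'rV[F]_n) :=
  forall x y, l 0 x * r 0 y = l 0 y * r 0 x.

Definition halves_collinear m (v : 'rV[F]_(m + m)) := collinear (lsubmx v) (rsubmx v).

Lemma collinear_sym n (l r : 'rV[F]_n) : collinear l r -> collinear r l.
Proof. by move=> c x y; rewrite mulrC c mulrC. Qed.

Lemma collinearDr n (l r s : 'rV[F]_n) :
  collinear l r -> collinear l (r + s) -> collinear l s.
Proof. by move=> c cD x y; move: (cD x y); rewrite !mxE !mulrDr c => /addrI. Qed.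

Lemma collinearDl n (l r s : 'rV[F]_n) :
  collinear l r -> collinear (l + s) r -> collinear s r.
Proof. by move=> c cD x y; move: (cD x y); rewrite !mxE !mulrDl c => /addrI. Qed.

Lemma collinear_scale n (c f : 'rV[F]_n) x0 :
  collinear c f -> c 0 x0 != 0 -> f = (f 0 x0 / c 0 x0) *: c.
Proof.
by move=> cf cx0; apply/rowP => k; rewrite mxE mulrAC [f 0 x0 * _]mulrC -cf mulrC mulKf.
Qed.

Lemma rV_neq0_coord n (v : 'rV[F]_n) : v != 0 -> exists j, v 0 j != 0.
Proof.
move=> nz; apply/existsP; apply: contraNT nz => /existsPn v0.
by apply/eqP/rowP => j; rewrite mxE; apply/eqP/negPn/v0.
Qed.

Lemma halves_collinear_rank_le2 m r (U : 'M[F]_(r, m + m)) (u w : 'rV_(m + m)) :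
  (forall v, (v <= U)%MS -> halves_collinear v) ->
  (u <= U)%MS -> u != 0 -> lsubmx u = 0 ->
  (w <= U)%MS -> w != 0 -> rsubmx w = 0 ->
  (\rank U <= 2)%N.
Proof.
move=> colU uU nzu ul0 wU nzw wr0.
set ur := rsubmx u; set wl := lsubmx w.
have eu : u = row_mx 0 ur by rewrite -ul0 hsubmxK.
have ew : w = row_mx wl 0 by rewrite -wr0 hsubmxK.
have col_wu : collinear wl ur.
  have := colU _ (addmx_sub wU uU).
  by rewrite /halves_collinear !raddfD /= ul0 wr0 addr0 add0r.
have [x0 urx0 wlx0] : exists2 x0, ur 0 x0 != 0 & wl 0 x0 != 0.
  have [x urx] : exists x, ur 0 x != 0.
    by apply: rV_neq0_coord; apply: contraNneq nzu; rewrite eu => ->; rewrite row_mx0.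
  have [y wly] : exists y, wl 0 y != 0.
    by apply: rV_neq0_coord; apply: contraNneq nzw; rewrite ew => ->; rewrite row_mx0.
  exists x => //; apply: contraNneq (mulf_neq0 wly urx).
  by rewrite col_wu => ->; rewrite mul0r.
have Uwu : (U <= w + u)%MS.
  apply/row_subP => i; set z := row i U; have zU : (z <= U)%MS := row_sub i U.
  have col_zu : collinear (lsubmx z) ur.
    apply: collinearDr (colU _ zU) _.
    by have := colU _ (addmx_sub zU uU); rewrite /halves_collinear !raddfD /= ul0 addr0.
  have col_wz : collinear wl (rsubmx z).
    apply: collinearDl (colU _ zU) _.
    by have := colU _ (addmx_sub zU wU); rewrite /halves_collinear !raddfD /= wr0 addr0.
  have [a zl] : exists a, lsubmx z = a *: wl.
    rewrite (collinear_scale (collinear_sym col_zu) urx0).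
    by rewrite (collinear_scale col_wu wlx0) scalerA; eexists.
  have [b zr] : exists b, rsubmx z = b *: ur.
    rewrite (collinear_scale col_wz wlx0).
    by rewrite (collinear_scale (collinear_sym col_wu) urx0) scalerA; eexists.
  have -> : z = a *: w + b *: u.
    by rewrite -[z]hsubmxK zl zr ew eu !scale_row_mx !scaler0 add_row_mx addr0 add0r.
  by apply: addmx_sub_adds; apply: scalemx_sub.
apply: leq_trans (mxrankS Uwu) _; apply: leq_trans (mxrank_adds_leqif w u) _.
exact: leq_add (rank_leq_row w) (rank_leq_row u).
Qed.

Lemma mulmx_ker_neq0 r n p (A : 'M[F]_(r, n)) (B : 'M[F]_(n, p)) :
  (\rank (A *m B) < \rank A)%N ->
  exists2 v : 'rV_n, (v <= A)%MS & v != 0 /\ v *m B = 0.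
Proof.
rewrite -(mxrank_mul_ker A B) -{1}[\rank (A *m B)]addn0 ltn_add2l lt0n mxrank_eq0.
case/rowV0Pn => v vAK nzv; exists v; first exact: submx_trans vAK (capmxSl _ _).
by split=> //; apply/sub_kermxP; exact: submx_trans vAK (capmxSr _ _).
Qed.

Lemma submx_mulP r n p (U : 'M[F]_(r, n)) (P : 'M[F]_(n, p)) (y : 'rV_p) :
  (y <= U *m P)%MS -> exists2 x : 'rV_n, (x <= U)%MS & y = x *m P.
Proof. by case/submxP=> D ->; exists (D *m U); rewrite ?submxMl ?mulmxA. Qed.

Lemma mulmx_lsub1 m n (v : 'rV[F]_(m + n)) : v *m lsubmx 1%:M = lsubmx v.
Proof. by rewrite mulmx_lsub mulmx1. Qed.

Lemma mulmx_rsub1 m n (v : 'rV[F]_(m + n)) : v *m rsubmx 1%:M = rsubmx v.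
Proof. by rewrite mulmx_rsub mulmx1. Qed.

Lemma halves_collinear_rank m r (U : 'M[F]_(r, m + m)) :
  (forall v, (v <= U)%MS -> halves_collinear v) -> (\rank U <= maxn 2 m)%N.
Proof.
move=> colU; rewrite leq_max.
case: (leqP (\rank U) m) => [_ | ltmU]; first by rewrite orbT.
have ltU (B : 'M_(m + m, m)) : (\rank (U *m B) < \rank U)%N.
  exact: leq_ltn_trans (rank_leq_col _) ltmU.
have [u uU [nzu]] := mulmx_ker_neq0 (ltU (lsubmx 1%:M)); rewrite mulmx_lsub1 => ul0.
have [w wU [nzw]] := mulmx_ker_neq0 (ltU (rsubmx 1%:M)); rewrite mulmx_rsub1 => wr0.
by rewrite (halves_collinear_rank_le2 colU uU nzu ul0 wU nzw wr0).
Qed.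

Lemma quarters_collinear_rank m r (U : 'M[F]_(r, (m + m) + (m + m))) :
  (forall v, (v <= U)%MS ->
     [/\ halves_collinear v, halves_collinear (lsubmx v) & halves_collinear (rsubmx v)]) ->
  (\rank U <= maxn 2 m)%N.
Proof.
move=> colU; rewrite leqNgt; apply/negP => ltU.
have half_rank (B : 'M_(m + m + (m + m), m + m)) :
    (forall v, (v <= U)%MS -> halves_collinear (v *m B)) -> (\rank (U *m B) < \rank U)%N.
  move=> colB; apply: leq_ltn_trans ltU.
  by apply: halves_collinear_rank => y /submx_mulP [x xU ->]; exact: colB.
have [u uU [nzu]] : exists2 u : 'rV_(m + m + (m + m)),
    (u <= U)%MS & u != 0 /\ u *m lsubmx 1%:M = 0.
  by apply: mulmx_ker_neq0; apply: half_rank => v /colU[]; rewrite mulmx_lsub1.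
rewrite mulmx_lsub1 => ul0.
have [w wU [nzw]] : exists2 w : 'rV_(m + m + (m + m)),
    (w <= U)%MS & w != 0 /\ w *m rsubmx 1%:M = 0.
  by apply: mulmx_ker_neq0; apply: half_rank => v /colU[]; rewrite mulmx_rsub1.
rewrite mulmx_rsub1 => wr0.
have colA v : (v <= U)%MS -> halves_collinear v by case/colU.
have := halves_collinear_rank_le2 colA uU nzu ul0 wU nzw wr0.
by rewrite leqNgt (leq_ltn_trans (leq_maxl 2 m) ltU).
Qed.
End Collinear.

Lemma idx_lt (i j k : 'I_2) : (4 * i + 2 * j + k < 8)%N.
Proof. by case: i j k => [[|[|//]] ?] [[|[|//]] ?] [[|[|//]] ?]. Qed.

Lemma val_idx i j k : nat_of_ord (idx i j k) = (4 * i + 2 * j + k)%N.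
Proof. exact: inordK (idx_lt i j k). Qed.

Definition coef_wrt (p : bipartition) (v : qstate) (x y1 y2 : 'I_2) : C :=
  match p with
  | A_BC => coef v x y1 y2
  | B_AC => coef v y1 x y2
  | C_AB => coef v y1 y2 x
  end.

Lemma product_wrt_minor p v : product_wrt p v -> forall x x' y1 y2 z1 z2,
  coef_wrt p v x y1 y2 * coef_wrt p v x' z1 z2 = coef_wrt p v x z1 z2 * coef_wrt p v x' y1 y2.
Proof. by case: p => -[a [w E]] x x' y1 y2 z1 z2; rewrite /coef_wrt !E; ring. Qed.

(* ['I_8] is convertible to ['I_((2 + 2) + (2 + 2))]: the outer halves of a state
   are its components along |0>_A and |1>_A, their halves those along |0>_B, |1>_B. *)
Local Notation qstate_split := 'rV[C]_((2 + 2) + (2 + 2)).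

Lemma quartersE (v : qstate_split) k :
  [/\ lsubmx (lsubmx v) 0 k = coef v 0 0 k, rsubmx (lsubmx v) 0 k = coef v 0 1 k,
      lsubmx (rsubmx v) 0 k = coef v 1 0 k & rsubmx (rsubmx v) 0 k = coef v 1 1 k].
Proof.
rewrite /coef !mxE; split; congr (v 0 _); apply: val_inj; rewrite /= val_idx;
  by case: k => [[|[|]]].
Qed.

Lemma product_A_BC_halves (v : qstate) :
  product_A_BC v -> halves_collinear (v : qstate_split).
Proof.
move=> /(product_wrt_minor (p := A_BC)) /= minor.
have row (x : 'I_(2 + 2)) : exists j k, lsubmx (v : qstate_split) 0 x = coef v 0 j k
                                    /\ rsubmx (v : qstate_split) 0 x = coef v 1 j k.
  rewrite -(splitK x); case: (split x) => k /=; have [q00 q01 q10 q11] := quartersE v k;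
    [exists 0 | exists 1]; exists k.
    by rewrite -q00 -q10 !mxE.
  by rewrite -q01 -q11 !mxE.
move=> x y; have [j [k [-> ->]]] := row x; have [j' [k' [-> ->]]] := row y.
exact: minor.
Qed.

Lemma product_B_AC_quarters (v : qstate) :
  product_B_AC v ->
  halves_collinear (lsubmx (v : qstate_split)) /\ halves_collinear (rsubmx (v : qstate_split)).
Proof.
move=> /(product_wrt_minor (p := B_AC)) /= minor.
split=> x y; have [q00 q01 q10 q11] := quartersE v x;
  have [r00 r01 r10 r11] := quartersE v y.
  by rewrite q00 q01 r00 r01 minor.
by rewrite q10 q11 r10 r11 minor.
Qed.

Lemma product_space_rank_le2 r (U : 'M[C]_(r, 8)) :
  (forall v : qstate, (v <= U)%MS -> product_A_BC v /\ product_B_AC v) ->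
  (\rank U <= 2)%N.
Proof.
move=> prodU; apply: (@quarters_collinear_rank _ 2 r U) => v vU.
have [pA /product_B_AC_quarters[colL colR]] := prodU v vU.
by split=> //; apply: product_A_BC_halves.
Qed.

Lemma inner_sumr n (c : 'I_n -> C) (X : 'I_n -> qstate) u :
  inner u (\sum_i c i *: X i) = \sum_i c i * inner u (X i).
Proof.
rewrite /inner; under eq_bigr => l _ do rewrite summxE mulr_sumr.
rewrite exchange_big; apply: eq_bigr => i _; rewrite mulr_sumr.
by apply: eq_bigr => l _; rewrite mxE mulrCA.
Qed.

Lemma inner_suml n (c : 'I_n -> C) (X : 'I_n -> qstate) v :
  inner (\sum_i c i *: X i) v = \sum_i (c i)^* * inner (X i) v.
Proof.
rewrite /inner; under eq_bigr => l _ do rewrite summxE rmorph_sum mulr_suml.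
rewrite exchange_big; apply: eq_bigr => i _; rewrite mulr_sumr.
by apply: eq_bigr => l _; rewrite mxE rmorphM mulrA.
Qed.

Lemma inner0r u : inner u 0 = 0.
Proof. by rewrite /inner big1 // => l _; rewrite mxE mulr0. Qed.

Lemma inner_self_eq0 v : (inner v v == 0) = (v == 0).
Proof.
apply/eqP/eqP => [v0 | ->]; last by rewrite inner0r.
have ge0 (l : 'I_8) : true -> 0 <= (v 0 l)^* * v 0 l by rewrite mulrC mul_conjC_ge0.
apply/rowP => l; rewrite mxE; apply/eqP; rewrite -mul_conjC_eq0 mulrC; apply/eqP.
exact: (psumr_eq0P ge0 v0).
Qed.

Lemma dim_span_orthogonal (S : seq qstate) :
  uniq S -> (forall v, v \in S -> v != 0) ->
  (forall u v, u \in S -> v \in S -> u != v -> inner u v = 0) ->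
  \dim <<S>> = size S.
Proof.
move=> uS nzS orthS; apply/eqP/(@freeP _ _ _ (in_tuple S)) => k sum0 j.
have Sj : S`_j \in S := mem_nth 0 (ltn_ord j).
have := congr1 (inner S`_j) sum0; rewrite inner0r inner_sumr (bigD1 j) //.
rewrite big1 => [|i ij]; last first.
  by rewrite orthS ?mulr0 ?mem_nth // nth_uniq // eq_sym.
by rewrite Monoid.mulm1 => /eqP; rewrite mulf_eq0 inner_self_eq0 (negbTE (nzS _ Sj)) orbF => /eqP.
Qed.

Lemma product_wrt0 p : product_wrt p 0.
Proof. by case: p; exists (fun=> 0), (fun _ _ => 0) => i j k; rewrite /coef mxE mulr0. Qed.

Lemma not_entangled_product p v : ~ entangled_wrt p v -> product_wrt p v.
Proof.
move=> nent; have [-> | nzv] := eqVneq v 0; first exact: product_wrt0.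
by apply: NNPP => nprod; apply: nent.
Qed.

Definition conj_cols (S : seq qstate) : 'M[C]_(8, size S) := \matrix_(l, i) (S`_i 0 l)^*.

Lemma ker_conj_cols_orth S v : (v <= kermx (conj_cols S))%MS -> orth_compl_span S v.
Proof.
move/sub_kermxP => vM w wS; rewrite (coord_span (X := in_tuple S) wS) inner_suml big1 // => i _.
suff -> : inner S`_i v = (v *m conj_cols S) 0 i by rewrite vM mxE mulr0.
by rewrite /inner mxE; apply: eq_bigr => l _; rewrite mxE mulrC.
Qed.

Lemma UEB_every_bipartition_size S : UEB_every_bipartition S -> size S = 6%N \/ size S = 7%N.
Proof.
case=> uS entS orthS dimS noent.
have dimE := dim_span_orthogonal uS (fun v vS => (entS v vS).1) orthS.
have prodK v : (v <= kermx (conj_cols S))%MS -> product_A_BC v /\ product_B_AC v.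
  move/ker_conj_cols_orth=> orth_v.
  by split; [apply: (not_entangled_product (p := A_BC))
            | apply: (not_entangled_product (p := B_AC))]; apply: noent.
have := product_space_rank_le2 prodK; rewrite mxrank_ker.
have := rank_leq_col (conj_cols S); rewrite dimE in dimS; lia.
Qed.

Lemma support00_product (v : qstate) :
  (forall a : 'I_8, (2 <= a)%N -> v 0 a = 0) -> forall p, product_wrt p v.
Proof.
move=> v0.
have cz i j k : (i != 0) || (j != 0) -> coef v i j k = 0.
  move=> ij; apply: v0; rewrite val_idx.
  by case: i j k ij => [[|[|//]] ?] [[|[|//]] ?] [[|[|//]] ?].
case.
- exists (fun i => (i == 0)%:R), (fun j k => coef v 0 j k) => i j k.
  case: (eqVneq i 0) => [-> | i0]; first by rewrite mul1r.
  by rewrite mul0r cz ?i0.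
- exists (fun j => (j == 0)%:R), (fun i k => coef v i 0 k) => i j k.
  case: (eqVneq j 0) => [-> | j0]; first by rewrite mul1r.
  by rewrite mul0r cz ?j0 ?orbT.
- exists (fun k => coef v 0 0 k), (fun i j => ((i == 0) && (j == 0))%:R) => i j k.
  case: (eqVneq i 0) => [-> | i0]; case: (eqVneq j 0) => [-> | j0];
    by rewrite ?mulr1 // mulr0 cz ?i0 ?j0 ?orbT.
Qed.

Definition vec (s : seq int) : qstate := \row_(l < 8) (nth 0 s l)%:~R.

(* Unlike the locked [\sum], this sum reduces, so the checks below compute. *)
Definition sumz (s : seq int) : int := foldr +%R 0 s.

Lemma sumzE (s : seq int) : (sumz s)%:~R = \sum_(x <- s) (x%:~R : C).
Proof. by rewrite -rmorph_sum unlock. Qed.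

Definition dotz (s t : seq int) : int := sumz [seq nth 0 s l * nth 0 t l | l <- iota 0 8].

Lemma inner_vec s v : inner (vec s) v = \sum_(l < 8) (nth 0 s l)%:~R * v 0 l.
Proof. by apply: eq_bigr => l _; rewrite mxE rmorph_int. Qed.

Lemma inner_vec_vec s t : inner (vec s) (vec t) = (dotz s t)%:~R.
Proof.
rewrite inner_vec sumzE big_map -[iota 0 8]/(index_iota 0 8) big_mkord.
by apply: eq_bigr => l _; rewrite mxE intrM.
Qed.

Lemma coef_vec s i j k : coef (vec s) i j k = (nth 0 s (4 * i + 2 * j + k))%:~R.
Proof. by rewrite /coef mxE val_idx. Qed.

Lemma vec_inj s t : size s = 8%N -> size t = 8%N -> vec s = vec t -> s = t.
Proof.
move=> s8 t8 st; apply: (@eq_from_nth _ 0); first by rewrite s8 t8.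
move=> l; rewrite s8 => l8; apply: (@intr_inj C).
by have /rowP/(_ (Ordinal l8)) := st; rewrite !mxE.
Qed.

Definition idx_wrt (p : bipartition) (x y1 y2 : nat) : nat :=
  match p with
  | A_BC => 4 * x + 2 * y1 + y2
  | B_AC => 4 * y1 + 2 * x + y2
  | C_AB => 4 * y1 + 2 * y2 + x
  end.

Lemma coef_wrt_vec p s x y1 y2 :
  coef_wrt p (vec s) x y1 y2 = (nth 0 s (idx_wrt p x y1 y2))%:~R.
Proof. by case: p; rewrite /coef_wrt coef_vec. Qed.

Definition pairs2 : seq ('I_2 * 'I_2) := [:: (0, 0); (0, 1); (1, 0); (1, 1)].

Definition minor_wrt p (s : seq int) (y z : 'I_2 * 'I_2) : int :=
  let c (x : 'I_2) (w : 'I_2 * 'I_2) := nth 0 s (idx_wrt p x w.1 w.2) in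
  c 0 y * c 1 z - c 0 z * c 1 y.

Definition entangled_wrt_cert p s :=
  has (fun y => has (fun z => minor_wrt p s y z != 0) pairs2) pairs2.

Lemma vec_not_product p s : entangled_wrt_cert p s -> ~ product_wrt p (vec s).
Proof.
case/hasP=> y _ /hasP[z _]; rewrite subr_eq0 => /eqP minor_neq0 /product_wrt_minor minor.
apply: minor_neq0; apply: (@intr_inj C); rewrite !intrM -!coef_wrt_vec.
exact: minor.
Qed.

Lemma resolution_coord_eq0 (L : seq (seq int)) (w : seq int -> int) (N : int) (a : 'I_8) v :
  N != 0 ->
  (forall l : 'I_8, sumz [seq w s * nth 0 s a * nth 0 s l | s <- L] = N * (a == l)%:Z) ->
  (forall s, s \in L -> inner (vec s) v = 0) -> v 0 a = 0.
Proof.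
move=> N0 res orthL.
have : \sum_(s <- L) (w s * nth 0 s a)%:~R * inner (vec s) v = 0.
  by rewrite big1_seq // => s /andP[_ sL]; rewrite orthL ?mulr0.
under eq_bigr => s _ do rewrite inner_vec mulr_sumr.
have resC (l : 'I_8) : \sum_(s <- L) (w s * nth 0 s a)%:~R * ((nth 0 s l)%:~R * v 0 l)
    = (N * (a == l)%:Z)%:~R * v 0 l.
  by rewrite -res sumzE big_map mulr_suml; apply: eq_bigr => s _; rewrite !intrM mulrA.
rewrite exchange_big; under eq_bigr do rewrite resC.
rewrite (bigD1 a) // big1 => [|l la]; last by rewrite eq_sym (negbTE la) mulr0 mul0r.
rewrite eqxx mulr1 Monoid.mulm1 => /eqP; rewrite mulf_eq0 intr_eq0 (negbTE N0).
by move/eqP.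
Qed.

(* For orthogonal [L] whose squared norms divide [N], the sum of [(N %/ |s|^2) s s^T]
   is [N] times the projection onto the span of [L]; the last hypothesis checks that
   it is [N] times the projection onto the basis vectors [|a>], [a >= 2]. *)
Lemma UEB_of_certificate (L : seq (seq int)) (N : int) :
  all (fun s => size s == 8%N) L -> uniq L ->
  all (fun s => all (fun t => (s == t) || (dotz s t == 0)) L) L ->
  all (fun s => [&& entangled_wrt_cert A_BC s, entangled_wrt_cert B_AC s
                  & entangled_wrt_cert C_AB s]) L ->
  (size L < 8)%N -> N != 0 ->
  all (fun a => all (fun b =>
      sumz [seq (N %/ dotz s s)%Z * nth 0 s a * nth 0 s b | s <- L] == N * (a == b)%:Z)
    (iota 0 8)) (iota 2 6) ->
  UEB_every_bipartition (map vec L).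
Proof.
move=> L8 uL orthL entL sizeL N0 resL; split.
- rewrite map_inj_in_uniq // => s t sL tL; apply: vec_inj; exact/eqP/(allP L8).
- move=> v /mapP[s sL ->]; have /and3P[eA eB eC] := allP entL s sL.
  split; last by case; apply: vec_not_product.
  by apply/eqP => s0; apply: (vec_not_product eA); rewrite s0; apply: product_wrt0.
- move=> u v /mapP[s sL ->] /mapP[t tL ->] st; rewrite inner_vec_vec.
  move: (allP (allP orthL s sL) t tL); case: eqP => [st_eq | _ /eqP -> //].
  by rewrite st_eq eqxx in st.
- by apply: leq_ltn_trans (dim_span _) _; rewrite size_map.
move=> p v orth [_]; apply; apply: support00_product => a a2.
apply: (resolution_coord_eq0 (w := fun s => (N %/ dotz s s)%Z) N0) => [l | s sL].
  have a_in : nat_of_ord a \in iota 2 6 by rewrite mem_iota a2 ltn_ord.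
  have l_in : nat_of_ord l \in iota 0 8 by rewrite mem_iota ltn_ord.
  exact/eqP/(allP (allP resL _ a_in) _ l_in).
by apply: orth; apply: memv_span; apply: map_f.
Qed.

Definition ueb7 : seq (seq int) :=
  [:: [:: 0; 1; 0; 0; 0; 0; 1; 0];
      [:: 0; 1; 0; 0; 0; 0; -1; 0];
      [:: 0; 0; 1; 0; 0; 1; 0; 0];
      [:: 0; 0; 1; 0; 0; -1; 0; 0];
      [:: 0; 0; 0; 1; 1; 0; 0; 1];
      [:: 0; 0; 0; -1; 1; 0; 0; 0];
      [:: 0; 0; 0; 1; 1; 0; 0; -2]].

Definition ueb6 : seq (seq int) :=
  [:: [:: 0; 0; 0; 1; 1; 0; 1; 1];
      [:: 0; 0; 0; 1; -1; 0; 1; -1];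
      [:: 0; 0; 0; 1; 1; 0; -1; -1];
      [:: 0; 0; 0; 1; -1; 0; -1; 1];
      [:: 0; 0; 1; 0; 0; 1; 0; 0];
      [:: 0; 0; 1; 0; 0; -1; 0; 0]].

Lemma UEB_every_bipartition_ueb7 : UEB_every_bipartition (map vec ueb7).
Proof. by apply: (UEB_of_certificate (N := 6)); vm_compute. Qed.

Lemma UEB_every_bipartition_ueb6 : UEB_every_bipartition (map vec ueb6).
Proof. by apply: (UEB_of_certificate (N := 4)); vm_compute. Qed.

Theorem proposition5 :
  (forall S : seq qstate, UEB_every_bipartition S -> size S = 6%N \/ size S = 7%N)
  /\ (exists S : seq qstate, UEB_every_bipartition S /\ size S = 6%N)
  /\ (exists S : seq qstate, UEB_every_bipartition S /\ size S = 7%N).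
Proof.
split; first exact: UEB_every_bipartition_size.
split; [exists (map vec ueb6) | exists (map vec ueb7)]; split.
- exact: UEB_every_bipartition_ueb6.
- by rewrite size_map.
- exact: UEB_every_bipartition_ueb7.
- by rewrite size_map.
Qed.
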